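(* Let $A,B\subseteq\mathbb{N}$ with $A\cap B=\emptyset$. Then $$\underline{\underline{d}}(A)+\underline{\underline{d}}(B)\le\underline{\underline{d}}(A\cup B)\le\underline{\underline{d}}(A)+\overline{\overline{d}}(B)\le\overline{\overline{d}}(A\cup B)\le\overline{\overline{d}}(A)+\overline{\overline{d}}(B).$$ If moreover $A\cup B\in\mathcal{D}$, then $d(A\cup B)=\underline{\underline{d}}(A)+\overline{\overline{d}}(B)$. If $A\in\mathcal{D}$ (and $A\cap B=\emptyset$), then $\overline{\overline{d}}(A\cup B)=d(A)+\overline{\overline{d}}(B)$.
   Context: $\mathbb{N}=\{1,2,3,\dots\}$. For $A\subseteq\mathbb{N}$ let $A(n)=|A\cap[1,n]|$. Let $\mathcal{D}$ be the collection of all $A\subseteq\mathbb{N}$ for which the asymptotic density $d(A)=\lim_{n\to\infty}\frac{A(n)}{n}$ exists. Define $\underline{\underline{d}}(A)=\sup\{d(B);\ B\subseteq A,\ B\in\mathcal{D}\}$ and $\overline{\overline{d}}(A)=\inf\{d(C);\ C\supseteq A,\ C\in\mathcal{D}\}$. *)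

From mathcomp Require Import all_boot all_order all_algebra.
From mathcomp Require Import all_classical all_reals topology normedtype sequences.
Set Implicit Arguments. Unset Strict Implicit. Unset Printing Implicit Defensive.
Import Order.TTheory GRing.Theory Num.Theory numFieldNormedType.Exports.
Local Open Scope classical_set_scope.
Local Open Scope ring_scope.

Definition Acount {R : realType} (A : set nat) (n : nat) : R :=
  \sum_(1 <= k < n.+1) (k \in A)%:R.

Definition dratio {R : realType} (A : set nat) (n : nat) : R :=
  Acount A n / n%:R.

Definition inD (R : realType) (A : set nat) : Prop :=
  cvgn (@dratio R A).

Definition dens {R : realType} (A : set nat) : R := limn (@dratio R A).

Definition ldd {R : realType} (A : set nat) : R :=
  sup [set x : R | exists B : set nat, B `<=` A /\ inD R B /\ x = dens B].

Definition udd {R : realType} (A : set nat) : R :=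
  inf [set x : R | exists C : set nat, A `<=` C /\ inD R C /\ x = dens C].

(* Inner and outer densities are approximated by sets of [D], on which the
   density is additive for disjoint unions and for differences [C `\` B] with
   [B `<=` C].  The one non-formal ingredient is that [E `\` C] need not lie in
   [D] for [E], [C] in [D], yet it always contains a set of density at least
   [d(E) - d(C)]: walk through [E `\` C] and keep an element [k] whenever fewer
   than [(d(E) - d(C)) k] elements have been kept.  This gives the two middle
   inequalities, and applied to [~` C1 `\` C2] the subadditivity of the outer
   density; the equalities follow because both densities agree with [d] on
   [D]. *)

From mathcomp Require Import all_boot all_order all_algebra.
From mathcomp Require Import all_classical all_reals topology normedtype sequences.
From mathcomp Require Import ring lra.
Import Order.TTheory GRing.Theory Num.Theory numFieldNormedType.Exports.
Local Open Scope classical_set_scope.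
Local Open Scope ring_scope.

Section Counting.
Context {R : realType}.

Lemma Acount0 (A : set nat) : Acount A 0 = 0 :> R.
Proof. by rewrite /Acount big_geq. Qed.

Lemma AcountS (A : set nat) n : Acount A n.+1 = Acount A n + (n.+1 \in A)%:R :> R.
Proof. by rewrite /Acount big_nat_recr. Qed.

Lemma Acount_set0 n : Acount set0 n = 0 :> R.
Proof. by rewrite /Acount big1 // => k _; rewrite in_set0. Qed.

Lemma Acount_setT n : Acount setT n = n%:R :> R.
Proof. by elim: n => [|n IH]; rewrite ?Acount0 // AcountS IH in_setT natr1. Qed.

Lemma le_Acount (A B : set nat) n : A `<=` B -> Acount A n <= Acount B n :> R.
Proof.
move=> AB; elim: n => [|n IH]; first by rewrite !Acount0.
rewrite !AcountS lerD //; case: (boolP (n.+1 \in A)) => [/set_mem/AB/mem_set -> //|_].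
by rewrite ler0n.
Qed.

Lemma Acount_ge0 (A : set nat) n : 0 <= Acount A n :> R.
Proof. by rewrite -(Acount_set0 n) le_Acount. Qed.

Lemma Acount_le (A : set nat) n : Acount A n <= n%:R :> R.
Proof. by rewrite -Acount_setT le_Acount. Qed.

Lemma AcountU (A B : set nat) n :
  A `&` B = set0 -> Acount (A `|` B) n = Acount A n + Acount B n :> R.
Proof.
move=> AB0; elim: n => [|n IH]; first by rewrite !Acount0 addr0.
rewrite !AcountS IH in_setU.
case: (boolP (n.+1 \in A)) => kA; case: (boolP (n.+1 \in B)) => kB /=; try lra.
have : (A `&` B) n.+1 by split; exact: set_mem.
by rewrite AB0.
Qed.

Lemma AcountD (B C : set nat) n :
  B `<=` C -> Acount (C `\` B) n = Acount C n - Acount B n :> R.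
Proof.
move=> BC; apply/eqP; rewrite eq_sym subr_eq -AcountU; last by rewrite setIC setDIK.
by rewrite setDKU.
Qed.

Lemma AcountD_increment (E C : set nat) m n : (m <= n)%N ->
  Acount E n - Acount E m - (Acount C n - Acount C m)
  <= Acount (E `\` C) n - Acount (E `\` C) m :> R.
Proof.
pose f k : R := Acount (E `\` C) k - Acount E k + Acount C k.
have /nondecreasing_seqP f_nd : forall k, f k <= f k.+1.
  move=> k; rewrite /f !AcountS in_setD.
  by case: (k.+1 \in E); case: (k.+1 \in C) => /=; lra.
by move=> /f_nd; rewrite /f; lra.
Qed.

End Counting.

Section Densities.
Context {R : realType}.
Implicit Types (A B C X : set nat) (a b c x : R).

Lemma dratioU A B :
  A `&` B = set0 -> dratio A \+ dratio B = dratio (A `|` B) :> (nat -> R).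
Proof. by move=> AB0; apply/funext => n; rewrite /dratio /= AcountU // mulrDl. Qed.

Lemma dratioD B C :
  B `<=` C -> dratio C \- dratio B = dratio (C `\` B) :> (nat -> R).
Proof. by move=> BC; apply/funext => n; rewrite /dratio /= AcountD // mulrBl. Qed.

Lemma cvg_dratioU {A B a b} : A `&` B = set0 ->
  dratio A @ \oo --> a -> dratio B @ \oo --> b -> dratio (A `|` B) @ \oo --> a + b.
Proof. by move=> AB0 hA hB; rewrite -dratioU //; exact: cvgD. Qed.

Lemma cvg_dratioD {B C b c} : B `<=` C ->
  dratio B @ \oo --> b -> dratio C @ \oo --> c -> dratio (C `\` B) @ \oo --> c - b.
Proof. by move=> BC hB hC; rewrite -dratioD //; exact: cvgB. Qed.

Lemma cvg_dratio_set0 : dratio set0 @ \oo --> (0 : R).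
Proof.
rewrite (_ : dratio set0 = cst 0); first exact: cvg_cst.
by apply/funext => n; rewrite /dratio Acount_set0 mul0r.
Qed.

Lemma cvg_dratio_setT : dratio setT @ \oo --> (1 : R).
Proof.
apply: cvg_near_cst; exists 1%N => // n /= n_gt0.
by rewrite /dratio Acount_setT divff // pnatr_eq0 -lt0n.
Qed.

Lemma cvg_dratioC {C c} : dratio C @ \oo --> c -> dratio (~` C) @ \oo --> 1 - c.
Proof. by rewrite -setTD => hC; exact: (cvg_dratioD (subsetT C) hC cvg_dratio_setT). Qed.

Lemma le_density {B X b x} : B `<=` X ->
  dratio B @ \oo --> b -> dratio X @ \oo --> x -> b <= x.
Proof.
move=> BX hB hX; rewrite -(cvg_lim _ hB) // -(cvg_lim _ hX) //.
apply: ler_lim; [exact: cvgP hB | exact: cvgP hX | apply: nearW => n].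
by rewrite /dratio ler_wpM2r ?invr_ge0 // le_Acount.
Qed.

Lemma density_ge0 X x : dratio X @ \oo --> x -> 0 <= x.
Proof. exact: le_density (@sub0set _ X) cvg_dratio_set0. Qed.

Lemma density_le1 X x : dratio X @ \oo --> x -> x <= 1.
Proof. by move=> hX; exact: (le_density (subsetT X) hX cvg_dratio_setT). Qed.

End Densities.

Section UniformApproximation.
Context {R : realType}.
Implicit Types (A : set nat) (t : R).

(* Convergence of [A(n)/n] to [t] restated with an additive error: the bound
   [M] does not depend on [n], so counts taken at two different times can be
   compared. *)
Definition approx_density A t := forall eps : R, 0 < eps ->
  exists M : R, forall n, `|Acount A n - t * n%:R| <= eps * n%:R + M.

Lemma approx_error_ge0 {A t} {eps M : R} :
  (forall n, `|Acount A n - t * n%:R| <= eps * n%:R + M) -> 0 <= M.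
Proof. by move=> /(_ 0%N); rewrite Acount0 mulr0 subr0 normr0 mulr0 add0r. Qed.

Lemma approx_density_cvg A t : approx_density A t -> dratio A @ \oo --> t.
Proof.
move=> hA; apply/cvgrPdist_le => e e_gt0.
have [M HM] := hA (e / 2) (divr_gt0 e_gt0 (ltr0Sn _ 1)).
have M_ge0 := approx_error_ge0 HM.
have bound_ge0 : 0 <= M * 2 / e by rewrite divr_ge0 ?mulr_ge0 // ltW.
exists (Num.bound (M * 2 / e)).+1 => // n /= nN.
have n_gt0 : 0 < n%:R :> R by rewrite ltr0n (leq_trans _ nN).
have : M * 2 / e < n%:R.
  by apply: lt_le_trans (archi_boundP bound_ge0) _; rewrite ler_nat ltnW.
rewrite ltr_pdivrMr // => M_small.
have -> : t - dratio A n = - (Acount A n - t * n%:R) / n%:R.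
  by rewrite /dratio; field; rewrite lt0r_neq0.
rewrite normrM normrN normfV (gtr0_norm n_gt0) ler_pdivrMr //.
by apply: le_trans (HM n) _; lra.
Qed.

Lemma cvg_approx_density A t : dratio A @ \oo --> t -> approx_density A t.
Proof.
move=> /cvgrPdist_le hA e e_gt0; have [N _ HN] := hA e e_gt0.
have M_ge0 : 0 <= N%:R * (1 + `|t|) by rewrite mulr_ge0 // addr_ge0.
exists (N%:R * (1 + `|t|)) => n.
have [Nn|nN] := leqP N n.
  have [->|n_gt0] := posnP n; first by rewrite Acount0 !mulr0 subr0 normr0 add0r.
  have n_pos : 0 < n%:R :> R by rewrite ltr0n.
  have -> : Acount A n - t * n%:R = - (t - dratio A n) * n%:R.
    by rewrite /dratio; field; rewrite lt0r_neq0.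
  rewrite normrM normrN (gtr0_norm n_pos) -[X in X <= _]addr0.
  by rewrite lerD ?ler_pM2r ?(HN n).
apply: le_trans (ler_normB _ _) _.
rewrite ger0_norm ?Acount_ge0 // normrM (ger0_norm (ler0n _ n)).
have nN' : n%:R <= N%:R :> R by rewrite ler_nat ltnW.
have := Acount_le (R := R) A n.
have : 0 <= e * n%:R by rewrite mulr_ge0 // ltW.
have : `|t| * n%:R <= `|t| * N%:R :> R by rewrite ler_wpM2l.
lra.
Qed.

End UniformApproximation.

Section Greedy.
Context {R : realType}.
Implicit Types (X E C : set nat) (t e c : R).

Fixpoint greedy_count X t n : nat :=
  if n is n'.+1 then
    (greedy_count X t n' + ((n'.+1 \in X) && ((greedy_count X t n')%:R < t * n'.+1%:R)%R))%N
  else 0%N.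

Definition greedy X t : set nat :=
  [set k | (k \in X) && ((greedy_count X t k.-1)%:R < t * k%:R)].

Lemma greedy_sub X t : greedy X t `<=` X.
Proof. by move=> k /andP [/set_mem]. Qed.

Lemma Acount_greedy X t n : Acount (greedy X t) n = (greedy_count X t n)%:R :> R.
Proof.
elim: n => [|n IH]; first by rewrite Acount0.
rewrite AcountS IH.
have -> : (n.+1 \in greedy X t) = (n.+1 \in X) && ((greedy_count X t n)%:R < t * n.+1%:R).
  by apply/idP/idP => [/set_mem //|]; exact: mem_set.
by rewrite /= natrD.
Qed.

Lemma greedy_count_le X t n : 0 <= t -> (greedy_count X t n)%:R <= t * n%:R + 1.
Proof.
move=> t_ge0; elim: n => [|n IH] /=; first by rewrite mulr0 add0r.
rewrite natrD -natr1 mulrDr mulr1.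
by case: (n.+1 \in X); case: ltP => /=; lra.
Qed.

(* [m] is the last time the greedy walk declined an element of [X]: from then
   on it has kept everything. *)
Lemma greedy_count_catchup X t n : exists2 m, (m <= n)%N &
  Acount X n - Acount X m + t * m%:R <= (greedy_count X t n)%:R.
Proof.
elim: n => [|n [m mn IH]] /=; first by exists 0%N; rewrite ?Acount0 ?mulr0 ?subrr ?addr0.
rewrite AcountS natrD.
case: (boolP (n.+1 \in X)) => nX /=; last by exists m; [exact: leqW | lra].
case: ltP => taken /=; first by exists m; [exact: leqW | lra].
by exists n.+1 => //; rewrite AcountS nX /=; lra.
Qed.

Definition lower_increment_density X t := forall eps : R, 0 < eps ->
  exists M : R, forall m n, (m <= n)%N ->
    t * (n%:R - m%:R) <= Acount X n - Acount X m + eps * n%:R + M.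

Lemma approx_density_greedy X t : 0 <= t ->
  lower_increment_density X t -> approx_density (greedy X t) t.
Proof.
move=> t_ge0 hX eps eps_gt0; have [M HM] := hX eps eps_gt0.
have M_ge0 : 0 <= M by have := HM 0%N 0%N (leqnn 0); rewrite !Acount0 !mulr0; lra.
exists (M + 1) => n; rewrite Acount_greedy.
have [m mn catchup] := greedy_count_catchup X t n.
have := HM m n mn; have := greedy_count_le X t n t_ge0.
have : 0 <= eps * n%:R by rewrite mulr_ge0 // ltW.
by rewrite ler_norml; lra.
Qed.

Lemma lower_increment_density_setD E C e c :
  dratio E @ \oo --> e -> dratio C @ \oo --> c ->
  lower_increment_density (E `\` C) (e - c).
Proof.
move=> /cvg_approx_density hE /cvg_approx_density hC eps eps_gt0.
have eps4_gt0 : 0 < eps / 4 by rewrite divr_gt0.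
have [ME HE] := hE _ eps4_gt0; have [MC HC] := hC _ eps4_gt0.
exists (2 * ME + 2 * MC) => m n mn.
have := AcountD_increment (R := R) E C m n mn.
have /ler_normlP [? ?] := HE n; have /ler_normlP [? ?] := HE m.
have /ler_normlP [? ?] := HC n; have /ler_normlP [? ?] := HC m.
have : eps / 4 * m%:R <= eps / 4 * n%:R by rewrite ler_wpM2l ?ler_nat // ltW.
lra.
Qed.

Lemma dense_subset_setD {E C e c} :
  dratio E @ \oo --> e -> dratio C @ \oo --> c ->
  exists G g, [/\ G `<=` E `\` C, dratio G @ \oo --> g & e - c <= g].
Proof.
move=> hE hC; have [ec_le0|ec_gt0] := lerP (e - c) 0.
  by exists set0, 0; split; [exact: sub0set | exact: cvg_dratio_set0 |].
exists (greedy (E `\` C) (e - c)), (e - c); split => //; first exact: greedy_sub.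
apply/approx_density_cvg/approx_density_greedy; first exact: ltW.
exact: lower_increment_density_setD.
Qed.

End Greedy.

Section InnerOuterDensity.
Context {R : realType}.
Implicit Types (A B C X : set nat) (b c x y : R).

Lemma inD_cvg X : inD R X -> dratio X @ \oo --> (dens X : R).
Proof. by []. Qed.

Lemma cvg_inD {X x} : dratio X @ \oo --> x -> inD R X /\ dens X = x.
Proof. by move=> hX; split; [exact: cvgP hX | exact: cvg_lim hX]. Qed.

Lemma le_ldd {X B b} : B `<=` X -> dratio B @ \oo --> b -> b <= ldd X.
Proof.
move=> BX /cvg_inD [iB dB]; apply: ub_le_sup; last by exists B; rewrite dB.
by exists 1 => _ [B' [_ [/inD_cvg/density_le1 ? ->]]].
Qed.

Lemma ldd_le X y :
  (forall B b, B `<=` X -> dratio B @ \oo --> b -> b <= y) -> ldd X <= y.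
Proof.
move=> hX; apply: ge_sup; last by move=> _ [B [BX [/inD_cvg/(hX _ _ BX) ? ->]]].
have [i0 d0] := cvg_inD cvg_dratio_set0.
by exists 0, set0; split; [exact: sub0set | rewrite d0].
Qed.

Lemma udd_le {X C c} : X `<=` C -> dratio C @ \oo --> c -> udd X <= c.
Proof.
move=> XC /cvg_inD [iC dC]; apply: ge_inf; last by exists C; rewrite dC.
by exists 0 => _ [C' [_ [/inD_cvg/density_ge0 ? ->]]].
Qed.

Lemma le_udd X y :
  (forall C c, X `<=` C -> dratio C @ \oo --> c -> y <= c) -> y <= udd X.
Proof.
move=> hX; apply: lb_le_inf; last by move=> _ [C [XC [/inD_cvg/(hX _ _ XC) ? ->]]].
have [iT dT] := cvg_inD cvg_dratio_setT.
by exists 1, setT; split; [exact: subsetT | rewrite dT].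
Qed.

Lemma ldd_inD X : inD R X -> ldd X = dens X :> R.
Proof.
move=> /inD_cvg hX; apply/le_anti/andP; split; last exact: le_ldd hX.
by apply: ldd_le => B b BX hB; exact: le_density BX hB hX.
Qed.

Lemma udd_inD X : inD R X -> udd X = dens X :> R.
Proof.
move=> /inD_cvg hX; apply/le_anti/andP; split; first exact: udd_le hX.
by apply: le_udd => C c XC hC; exact: le_density XC hX hC.
Qed.

Lemma le_lddU A B : A `&` B = set0 -> ldd A + ldd B <= ldd (A `|` B) :> R.
Proof.
move=> AB0; rewrite -lerBrDl; apply: ldd_le => B2 b2 B2B hB2.
rewrite lerBrDl -lerBrDr; apply: ldd_le => B1 b1 B1A hB1.
rewrite lerBrDr; apply: le_ldd (setUSS B1A B2B) _.
exact: cvg_dratioU (subsetI_eq0 B1A B2B AB0) hB1 hB2.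
Qed.

(* [E `\` C] need not have a density; a dense subset of it is picked greedily. *)
Lemma lddU_le A B : ldd (A `|` B) <= ldd A + udd B :> R.
Proof.
apply: ldd_le => E e EAB hE; rewrite -lerBlDl; apply: le_udd => C c BC hC.
have [G [g [GEC hG ecg]]] := dense_subset_setD hE hC.
have : g <= ldd A by apply: le_ldd _ hG => k /GEC [/EAB [//|/BC]].
lra.
Qed.

Lemma le_uddU A B : A `&` B = set0 -> ldd A + udd B <= udd (A `|` B) :> R.
Proof.
move=> AB0; apply: le_udd => C c ABC hC; rewrite -lerBrDr.
apply: ldd_le => B1 b1 B1A hB1; rewrite lerBrDr addrC -lerBrDr.
have B1C : B1 `<=` C by move=> k /B1A Ak; apply: ABC; left.
apply: udd_le _ (cvg_dratioD B1C hB1 hC) => k Bk; split; first by apply: ABC; right.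
by move=> /B1A Ak; have : (A `&` B) k by []; rewrite AB0.
Qed.

(* [C1 `|` C2] need not have a density, but it lies in the complement of a
   dense subset of [~` C1 `\` C2]. *)
Lemma uddU_le A B : udd (A `|` B) <= udd A + udd B :> R.
Proof.
rewrite -lerBlDr; apply: le_udd => C1 c1 AC1 hC1.
rewrite lerBlDr addrC -lerBlDr; apply: le_udd => C2 c2 BC2 hC2.
have [G [g [GC hG gle]]] := dense_subset_setD (cvg_dratioC hC1) hC2.
have : udd (A `|` B) <= 1 - g.
  by apply: udd_le _ (cvg_dratioC hG) => k ABk /GC [nC1 nC2]; case: ABk => [/AC1|/BC2].
lra.
Qed.

End InnerOuterDensity.

Theorem proposition3p11 (R : realType) (A B : set nat) :
  A `&` B = set0 ->
  (ldd A + ldd B <= ldd (A `|` B) :> R /\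
   ldd (A `|` B) <= ldd A + udd B :> R /\
   ldd A + udd B <= udd (A `|` B) :> R /\
   udd (A `|` B) <= udd A + udd B :> R) /\
  (inD R (A `|` B) -> dens (A `|` B) = ldd A + udd B :> R) /\
  (inD R A -> udd (A `|` B) = dens A + udd B :> R).
Proof.
move=> AB0.
have ldd_lo := @le_lddU R A B AB0; have ldd_up := @lddU_le R A B.
have udd_lo := @le_uddU R A B AB0; have udd_up := @uddU_le R A B.
split; first by [].
split => [/[dup] /ldd_inD lddD /udd_inD uddD | /[dup] /ldd_inD lddA /udd_inD uddA].
  by apply/le_anti; rewrite -{1}lddD -uddD ldd_up udd_lo.
by apply/le_anti; rewrite -{1}uddA -lddA udd_up udd_lo.
Qed.
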